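(* Let $M,M'\in S_2^+$, let $(e,f)$ be an $M$-reduced basis and $(e',f')$ an $M'$-reduced basis of $\mathbb Z^2$. Let $\tau\ge1$ satisfy $\tau^{-2}M\le M'\le\tau^2M$ in the sense of symmetric matrices. Assume either (i) $2\mu(M)<\lambda_1(M)^2$ and $\tau=1$; or (ii) $4\mu(M)\le\lambda_1(M)^2$ and $\tau^4\le1+\tfrac13\kappa(M)^{-2}$. Then $\{e',f'\}\subset\{e,f,-e,-f\}$.
   Context: $\|e\|_M:=\sqrt{\langle e,Me\rangle}$, and $\kappa(M):=\sqrt{\|M\|\,\|M^{-1}\|}$ (operator norms). An $M$-reduced basis of $\mathbb Z^2$ is a basis $(e_1,e_2)$ (pair in $\mathbb Z^2$ with determinant $\pm1$) such that $\|e_1\|_M=\min\{\|e\|_M:e\in\mathbb Z^2\setminus\{0\}\}$ and $\|e_2\|_M=\min\{\|e\|_M:e\in\mathbb Z^2\setminus e_1\mathbb Z\}$. The Minkowski minima are $\lambda_1(M):=\|e_1\|_M$ and $\lambda_2(M):=\|e_2\|_M$; they are independent of the choice. Also $\mu(M):=|\langle e_1,Me_2\rangle|=\sqrt{\lambda_1(M)^2\lambda_2(M)^2-\det M}$, which is likewise independent of the choice. *)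

From Stdlib Require Import Reals ZArith ClassicalEpsilon.
Open Scope R_scope.

Record mat2 := Mat2 { a11 : R; a12 : R; a21 : R; a22 : R }.

Definition mulv (A : mat2) (v : R * R) : R * R :=
  (a11 A * fst v + a12 A * snd v, a21 A * fst v + a22 A * snd v).
Definition dot (u v : R * R) : R := fst u * fst v + snd u * snd v.
Definition enorm (v : R * R) : R := sqrt (dot v v).

Definition is_sym (A : mat2) : Prop := a12 A = a21 A.
Definition pos_def (A : mat2) : Prop :=
  forall v : R * R, v <> (0, 0) -> 0 < dot v (mulv A v).
Definition S2plus (A : mat2) : Prop := is_sym A /\ pos_def A.

Definition det2 (A : mat2) : R := a11 A * a22 A - a12 A * a21 A.
Definition inv2 (A : mat2) : mat2 :=
  Mat2 (a22 A / det2 A) (- a12 A / det2 A) (- a21 A / det2 A) (a11 A / det2 A).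
Definition scal2 (c : R) (A : mat2) : mat2 :=
  Mat2 (c * a11 A) (c * a12 A) (c * a21 A) (c * a22 A).

Definition loewner_le (A B : mat2) : Prop :=
  forall v : R * R, dot v (mulv A v) <= dot v (mulv B v).

Definition opnorm_set (A : mat2) (r : R) : Prop :=
  exists v : R * R, v <> (0, 0) /\ r = enorm (mulv A v) / enorm v.
Definition opnorm (A : mat2) : R :=
  epsilon (inhabits 0) (fun r => is_lub (opnorm_set A) r).
Definition kappa (M : mat2) : R := sqrt (opnorm M * opnorm (inv2 M)).

Definition zv (e : Z * Z) : R * R := (IZR (fst e), IZR (snd e)).
Definition Mnorm (M : mat2) (e : Z * Z) : R := sqrt (dot (zv e) (mulv M (zv e))).
Definition Mdot (M : mat2) (e f : Z * Z) : R := dot (zv e) (mulv M (zv f)).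

Definition zdet (e f : Z * Z) : Z := (fst e * snd f - snd e * fst f)%Z.
Definition in_line (e x : Z * Z) : Prop :=
  exists k : Z, x = ((k * fst e)%Z, (k * snd e)%Z).
Definition zneg (e : Z * Z) : Z * Z := ((- fst e)%Z, (- snd e)%Z).

Definition reduced_basis (M : mat2) (e1 e2 : Z * Z) : Prop :=
  (zdet e1 e2 = 1%Z \/ zdet e1 e2 = (-1)%Z) /\
  (forall x : Z * Z, x <> (0%Z, 0%Z) -> Mnorm M e1 <= Mnorm M x) /\
  (forall x : Z * Z, ~ in_line e1 x -> Mnorm M e2 <= Mnorm M x).

(* Minkowski minimum lambda_1(M) and mu(M), computed from an M-reduced basis
   (e1,e2); these are independent of the choice of reduced basis. *)
Definition lambda1_of (M : mat2) (e1 e2 : Z * Z) : R := Mnorm M e1.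
Definition mu_of (M : mat2) (e1 e2 : Z * Z) : R := Rabs (Mdot M e1 e2).

From Stdlib Require Import Reals ZArith Classical ClassicalEpsilon Lra Lia Psatz.
Open Scope R_scope.

(* Write L1 = |e|_M^2, L2 = |f|_M^2, m = <e, M f> for an M-reduced basis
   (e, f); reduction gives 0 < L1 <= L2 and 2|m| <= L1.  The Loewner bounds
   tau^-2 M <= M' <= tau^2 M mean that whenever |x|_M' <= |y|_M' we have
   |x|_M^2 <= T |y|_M^2 with T = tau^4.  So the M'-reduced vectors e', f' are
   lattice vectors a e + b f whose M-norm is at most T times that of e or f,
   and an elementary analysis of the binary form
   g(a,b) = a^2 L1 + 2ab m + b^2 L2 shows that the only such vectors are
   +-e and +-f, provided T satisfies an arithmetic condition ("admissible"). *)

Definition qform (A : mat2) (v : R * R) : R := dot v (mulv A v).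

Lemma dot_self_nonneg (v : R * R) : 0 <= dot v v.
Proof. destruct v as [x y]; unfold dot; simpl; nra. Qed.

Lemma dot_self_pos (v : R * R) : v <> (0, 0) -> 0 < dot v v.
Proof.
  destruct v as [x y]; intros Hv; unfold dot; simpl.
  destruct (Req_dec x 0) as [->|Hx]; [destruct (Req_dec y 0) as [->|Hy]|];
    [now contradiction Hv | nra | nra].
Qed.

Lemma enorm_sq (v : R * R) : enorm v ^ 2 = dot v v.
Proof. apply pow2_sqrt, dot_self_nonneg. Qed.

Lemma cauchy_schwarz_sq (u v : R * R) : (dot u v) ^ 2 <= dot u u * dot v v.
Proof.
  destruct u as [u1 u2], v as [v1 v2]; unfold dot; simpl.
  pose proof (pow2_ge_0 (u1 * v2 - u2 * v1)); nra.
Qed.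

Lemma dot_le_enorm (u v : R * R) : dot u v <= enorm u * enorm v.
Proof.
  unfold enorm; rewrite <- sqrt_mult_alt by apply dot_self_nonneg.
  eapply Rle_trans; [apply Rle_abs|]; rewrite <- sqrt_Rsqr_abs.
  apply sqrt_le_1_alt; unfold Rsqr; pose proof (cauchy_schwarz_sq u v); lra.
Qed.

(* |A v| / |v| is bounded (by 1 + the squared Frobenius norm), so the
   operator norm, defined as a least upper bound, exists. *)
Lemma opnorm_set_bounded (A : mat2) : bound (opnorm_set A).
Proof.
  set (S := dot (a11 A, a12 A) (a11 A, a12 A) + dot (a21 A, a22 A) (a21 A, a22 A)).
  assert (HS : 0 <= S) by (unfold S; pose proof (dot_self_nonneg (a11 A, a12 A));
                          pose proof (dot_self_nonneg (a21 A, a22 A)); lra).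
  exists (1 + S); intros r [v [Hv ->]].
  assert (Hrow : dot (mulv A v) (mulv A v) <= S * dot v v).
  { pose proof (cauchy_schwarz_sq (a11 A, a12 A) v) as C1.
    pose proof (cauchy_schwarz_sq (a21 A, a22 A) v) as C2.
    destruct v as [x y]; unfold S, mulv, dot in *; simpl in *; nra. }
  pose proof (dot_self_pos v Hv) as Hv0.
  assert (Hn : 0 < enorm v) by (apply sqrt_lt_R0; exact Hv0).
  assert (Hr0 : 0 <= enorm (mulv A v) / enorm v)
    by (apply Rmult_le_pos; [apply sqrt_pos | left; apply Rinv_0_lt_compat; lra]).
  assert (Hr2 : (enorm (mulv A v) / enorm v) ^ 2 <= S).
  { unfold Rdiv; rewrite Rpow_mult_distr, pow_inv, !enorm_sq.
    apply Rmult_le_reg_r with (dot v v); [lra|].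
    field_simplify; lra. }
  nra.
Qed.

Lemma opnorm_is_lub (A : mat2) : is_lub (opnorm_set A) (opnorm A).
Proof.
  unfold opnorm; apply epsilon_spec.
  destruct (completeness (opnorm_set A) (opnorm_set_bounded A)) as [r Hr].
  - exists (enorm (mulv A (1, 0)) / enorm (1, 0)), (1, 0).
    split; [intros E; injection E; lra | reflexivity].
  - now exists r.
Qed.

Lemma qform_le_opnorm (A : mat2) (v : R * R) : qform A v <= opnorm A * dot v v.
Proof.
  destruct (classic (v = (0, 0))) as [->|Hv].
  { unfold qform, dot, mulv; simpl; lra. }
  assert (Hn : 0 < enorm v) by (apply sqrt_lt_R0, dot_self_pos, Hv).
  assert (Hratio : enorm (mulv A v) / enorm v <= opnorm A)
    by (apply (proj1 (opnorm_is_lub A)); now exists v).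
  assert (Hle : enorm (mulv A v) <= opnorm A * enorm v).
  { apply Rmult_le_reg_r with (/ enorm v); [apply Rinv_0_lt_compat; lra|].
    rewrite Rmult_assoc, Rinv_r by lra; lra. }
  rewrite <- enorm_sq.
  eapply Rle_trans; [apply dot_le_enorm|]. nra.
Qed.

Lemma opnorm_nonneg (A : mat2) : 0 <= opnorm A.
Proof.
  apply Rle_trans with (enorm (mulv A (1, 0)) / enorm (1, 0)).
  - apply Rmult_le_pos; [apply sqrt_pos|].
    left; apply Rinv_0_lt_compat, sqrt_lt_R0; unfold dot; simpl; lra.
  - apply (proj1 (opnorm_is_lub A)); exists (1, 0).
    split; [intros E; injection E; lra | reflexivity].
Qed.

(* The rotation J by a right angle; it intertwines M and det(M) M^-1. *)
Definition perp (v : R * R) : R * R := (- snd v, fst v).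

Lemma qform_nonneg (M : mat2) (v : R * R) : pos_def M -> 0 <= qform M v.
Proof.
  intros Hp; destruct (classic (v = (0, 0))) as [->|Hv].
  - unfold qform, dot, mulv; simpl; lra.
  - left; apply Hp, Hv.
Qed.

Lemma det2_pos (M : mat2) : S2plus M -> 0 < det2 M.
Proof.
  intros [Hs Hp]; unfold is_sym in Hs.
  assert (H1 : 0 < a11 M).
  { assert (H : 0 < qform M (1, 0)) by (apply Hp; intros E; injection E; lra).
    unfold qform, dot, mulv in H; simpl in H; lra. }
  assert (H2 : 0 < qform M (- a12 M, a11 M)) by (apply Hp; intros E; injection E; lra).
  unfold qform, dot, mulv, det2 in *; simpl in *; rewrite <- Hs in *; nra.
Qed.

Lemma qform_inv2_perp (M : mat2) (v : R * R) : is_sym M -> det2 M <> 0 ->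
  qform (inv2 M) (perp v) = qform M v / det2 M.
Proof.
  intros Hs Hd; destruct v as [x y]; unfold qform, dot, mulv, inv2, perp, is_sym in *; simpl.
  rewrite Hs; field; exact Hd.
Qed.

Lemma qform_perp_gram (M : mat2) (v : R * R) : is_sym M ->
  qform M v * qform M (perp v) - (dot v (mulv M (perp v))) ^ 2 = det2 M * (dot v v) ^ 2.
Proof.
  intros Hs; destruct v as [x y]; unfold qform, dot, mulv, perp, det2, is_sym in *; simpl.
  rewrite Hs; ring.
Qed.

(* The two Rayleigh bounds, for M and for M^-1, combine into
   <u,Mu> <v,Mv> <= kappa(M)^2 det M |u|^2 |v|^2. *)
Lemma qform_prod_le (M : mat2) (u v : R * R) : S2plus M ->
  qform M u * qform M v <= opnorm M * opnorm (inv2 M) * det2 M * (dot u u * dot v v).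
Proof.
  intros HM; pose proof (det2_pos M HM) as Hd; destruct HM as [Hs Hp].
  assert (Hv : qform M v <= det2 M * (opnorm (inv2 M) * dot v v)).
  { replace (qform M v) with (det2 M * qform (inv2 M) (perp v))
      by (rewrite qform_inv2_perp by (auto; lra); field; lra).
    replace (dot v v) with (dot (perp v) (perp v))
      by (destruct v; unfold dot, perp; simpl; ring).
    apply Rmult_le_compat_l; [lra | apply qform_le_opnorm]. }
  pose proof (qform_le_opnorm M u).
  pose proof (qform_nonneg M u Hp); pose proof (qform_nonneg M v Hp).
  apply Rle_trans with (opnorm M * dot u u * (det2 M * (opnorm (inv2 M) * dot v v))).
  - apply Rmult_le_compat; auto.
  - right; ring.
Qed.

Lemma condition_sq_ge_1 (M : mat2) : S2plus M -> 1 <= opnorm M * opnorm (inv2 M).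
Proof.
  intros HM; pose proof (det2_pos M HM) as Hd.
  set (v := (1, 0)).
  pose proof (qform_prod_le M v (perp v) HM) as Hle.
  pose proof (qform_perp_gram M v (proj1 HM)) as Hgram.
  replace (dot (perp v) (perp v)) with 1 in Hle by (unfold dot, perp, v; simpl; ring).
  replace (dot v v) with 1 in Hle, Hgram by (unfold dot, v; simpl; ring).
  pose proof (pow2_ge_0 (dot v (mulv M (perp v)))); nra.
Qed.

Lemma det2_le_condition_qform (M : mat2) (v : R * R) : S2plus M ->
  det2 M * (dot v v) ^ 2 <= opnorm M * opnorm (inv2 M) * (qform M v) ^ 2.
Proof.
  intros HM; pose proof (det2_pos M HM) as Hd.
  pose proof (qform_prod_le M (perp v) (perp v) HM) as Hle.
  pose proof (qform_perp_gram M v (proj1 HM)) as Hgram.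
  replace (dot (perp v) (perp v)) with (dot v v) in Hle
    by (destruct v; unfold dot, perp; simpl; ring).
  pose proof (pow2_ge_0 (dot v (mulv M (perp v)))).
  pose proof (qform_nonneg M v (proj2 HM)); pose proof (qform_nonneg M (perp v) (proj2 HM)).
  pose proof (condition_sq_ge_1 M HM); pose proof (dot_self_nonneg v).
  set (K := opnorm M * opnorm (inv2 M)) in *.
  set (n := dot v v) in *; set (p := qform M v) in *; set (q := qform M (perp v)) in *.
  replace (n * n) with (n ^ 2) in Hle by ring.
  assert (Hpq : det2 M * n ^ 2 <= p * q) by lra.
  assert (Hsq : (det2 M * n ^ 2) ^ 2 <= p ^ 2 * (K * det2 M * n ^ 2)).
  { apply Rle_trans with ((p * q) ^ 2).
    - apply pow_incr; split; [nra | exact Hpq].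
    - replace ((p * q) ^ 2) with (p ^ 2 * (q * q)) by ring.
      apply Rmult_le_compat_l; [nra | exact Hle]. }
  destruct (Req_dec n 0) as [Hn|Hn].
  - rewrite Hn; nra.
  - assert (0 < det2 M * n ^ 2) by (apply Rmult_lt_0_compat; [lra | apply pow_lt; lra]).
    apply Rmult_le_reg_r with (det2 M * n ^ 2); [lra|]. nra.
Qed.

Lemma kappa_sq (M : mat2) : kappa M ^ 2 = opnorm M * opnorm (inv2 M).
Proof.
  apply pow2_sqrt; apply Rmult_le_pos; apply opnorm_nonneg.
Qed.

Definition unimodular (e f : Z * Z) : Prop := zdet e f = 1%Z \/ zdet e f = (-1)%Z.

Definition comb (a b : Z) (e f : Z * Z) : Z * Z :=
  ((a * fst e + b * fst f)%Z, (a * snd e + b * snd f)%Z).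

(* Every lattice vector has integer coordinates in a basis (Cramer's rule). *)
Lemma comb_surjective (e f : Z * Z) : unimodular e f ->
  forall x, exists a b, x = comb a b e f.
Proof.
  intros Hd [x1 x2].
  exists (zdet e f * zdet (x1, x2) f)%Z, (zdet e f * zdet e (x1, x2))%Z.
  assert (Hdd : (zdet e f * zdet e f = 1)%Z) by (destruct Hd as [-> | ->]; reflexivity).
  destruct e as [e1 e2], f as [f1 f2]; unfold comb, zdet in *; simpl in *.
  f_equal; [transitivity (x1 * (e1 * f2 - e2 * f1) * (e1 * f2 - e2 * f1))%Z
           |transitivity (x2 * (e1 * f2 - e2 * f1) * (e1 * f2 - e2 * f1))%Z];
    solve [rewrite <- Z.mul_assoc, Hdd; ring | ring].
Qed.

Lemma zdet_comb_l (e f : Z * Z) (a b : Z) : zdet e (comb a b e f) = (b * zdet e f)%Z.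
Proof. unfold zdet, comb; simpl; ring. Qed.

Lemma zdet_comb_r (e f : Z * Z) (a b : Z) : zdet f (comb a b e f) = (- a * zdet e f)%Z.
Proof. unfold zdet, comb; simpl; ring. Qed.

Lemma zdet_swap (u v : Z * Z) : zdet v u = (- zdet u v)%Z.
Proof. unfold zdet; ring. Qed.

Lemma zdet_zneg (u v : Z * Z) : zdet (zneg u) v = (- zdet u v)%Z.
Proof. unfold zdet, zneg; simpl; ring. Qed.

Lemma not_in_line (u x : Z * Z) : zdet u x <> 0%Z -> ~ in_line u x.
Proof. intros Hd [k ->]; apply Hd; unfold zdet; simpl; ring. Qed.

Definition gram_form (L1 L2 m : R) (a b : Z) : R :=
  IZR a * IZR a * L1 + 2 * IZR a * IZR b * m + IZR b * IZR b * L2.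

Lemma qform_comb (M : mat2) (e f : Z * Z) (a b : Z) : is_sym M ->
  qform M (zv (comb a b e f))
  = gram_form (qform M (zv e)) (qform M (zv f)) (Mdot M e f) a b.
Proof.
  intros Hs; destruct e as [e1 e2], f as [f1 f2].
  unfold qform, gram_form, Mdot, comb, zv, dot, mulv, is_sym in *; simpl.
  rewrite !plus_IZR, !mult_IZR, Hs; ring.
Qed.

Lemma gram_det (M : mat2) (e f : Z * Z) : is_sym M ->
  qform M (zv e) * qform M (zv f) - Mdot M e f ^ 2 = det2 M * IZR (zdet e f) ^ 2.
Proof.
  intros Hs; destruct e as [e1 e2], f as [f1 f2].
  unfold qform, Mdot, zdet, zv, dot, mulv, det2, is_sym in *; simpl.
  rewrite minus_IZR, !mult_IZR, Hs; ring.
Qed.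

Lemma dot_zv_ge_1 (x : Z * Z) : x <> (0%Z, 0%Z) -> 1 <= dot (zv x) (zv x).
Proof.
  destruct x as [x1 x2]; intros Hx; unfold dot, zv; simpl.
  rewrite <- !mult_IZR, <- plus_IZR; apply IZR_le.
  destruct (Z.eq_dec x1 0) as [->|]; [destruct (Z.eq_dec x2 0) as [->|]|];
    [now contradiction Hx | nia | nia].
Qed.

Lemma zv_neq_0 (x : Z * Z) : x <> (0%Z, 0%Z) -> zv x <> (0, 0).
Proof.
  intros Hx E; pose proof (dot_zv_ge_1 x Hx) as Hlen.
  rewrite E in Hlen; unfold dot in Hlen; simpl in Hlen; lra.
Qed.

Lemma unimodular_neq_0 (e f : Z * Z) : unimodular e f -> e <> (0%Z, 0%Z) /\ f <> (0%Z, 0%Z).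
Proof. intros Hd; split; intros ->; unfold unimodular, zdet in Hd; simpl in Hd; lia. Qed.

Lemma qform_le_of_Mnorm_le (M : mat2) (x y : Z * Z) : pos_def M ->
  Mnorm M x <= Mnorm M y -> qform M (zv x) <= qform M (zv y).
Proof. intros Hp; apply sqrt_le_0; apply qform_nonneg, Hp. Qed.

(* The Gram data of an M-reduced basis satisfy 0 < L1 <= L2 and 2|m| <= L1
   (compare f with f + e and f - e). *)
Lemma reduced_gram (M : mat2) (e f : Z * Z) : S2plus M -> reduced_basis M e f ->
  0 < qform M (zv e) /\ qform M (zv e) <= qform M (zv f) /\
  2 * Rabs (Mdot M e f) <= qform M (zv e).
Proof.
  intros [Hs Hp] [Hd [He Hf]].
  destruct (unimodular_neq_0 e f Hd) as [He0 Hf0].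
  assert (Hline : forall a, ~ in_line e (comb a 1 e f))
    by (intros a; apply not_in_line; rewrite zdet_comb_l; unfold unimodular in Hd; lia).
  assert (Hplus := qform_le_of_Mnorm_le M _ _ Hp (Hf _ (Hline 1%Z))).
  assert (Hminus := qform_le_of_Mnorm_le M _ _ Hp (Hf _ (Hline (-1)%Z))).
  rewrite !qform_comb in Hplus, Hminus by exact Hs; unfold gram_form in *; simpl in *.
  split; [apply Hp, zv_neq_0, He0|].
  split; [apply qform_le_of_Mnorm_le, He; assumption|].
  unfold Rabs; destruct (Rcase_abs (Mdot M e f)); lra.
Qed.

(* The arithmetic condition on T = tau^4 and the Gram data under which no
   vector other than +-e, +-f can become M'-short; both hypotheses (i) and
   (ii) of the theorem imply it. *)
Definition admissible (L1 L2 m T : R) : Prop :=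
  1 <= T < 3 /\
  ((T = 1 /\ 2 * Rabs m < L1) \/ (4 * Rabs m <= L1 /\ (T - 1) * L2 < L1 / 2)).

(* Rsqr_abs with the square unfolded, for use by nra. *)
Lemma sqr_Rabs (x : R) : x * x = Rabs x * Rabs x.
Proof. exact (Rsqr_abs x). Qed.

Section GramForm.

Variables (L1 L2 m T : R).
Hypotheses (HL1 : 0 < L1) (HL12 : L1 <= L2) (Hm : 2 * Rabs m <= L1)
  (HT : admissible L1 L2 m T).

(* |b| >= 2: completing the square, L1 g(a,b) >= b^2 (L1 L2 - m^2) >= 3 L1 L2. *)
Lemma gram_form_large_b (a b : Z) : (2 <= Z.abs b)%Z -> T * L2 < gram_form L1 L2 m a b.
Proof.
  intros Hb; unfold gram_form.
  assert (Hb2 : 4 <= IZR b * IZR b) by (rewrite <- mult_IZR; apply IZR_le; nia).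
  assert (Hm2 : m * m <= L1 * L1 / 4).
  { rewrite sqr_Rabs; pose proof (Rabs_pos m); nra. }
  assert (Hid : L1 * (IZR a * IZR a * L1 + 2 * IZR a * IZR b * m + IZR b * IZR b * L2)
                = (IZR a * L1 + IZR b * m) ^ 2 + IZR b * IZR b * (L1 * L2 - m * m)) by ring.
  apply Rmult_lt_reg_l with L1; [exact HL1|]; rewrite Hid.
  pose proof (pow2_ge_0 (IZR a * L1 + IZR b * m)).
  assert (Hdisc : 3 / 4 * (L1 * L2) <= L1 * L2 - m * m) by nra.
  assert (3 * (L1 * L2) <= IZR b * IZR b * (L1 * L2 - m * m)) by nra.
  assert (0 < L1 * L2) by nra.
  destruct HT as [[_ HT3] _]; nra.
Qed.

(* |b| = 1, a <> 0: g(a,b) - L2 >= |a| (|a| L1 - 2|m|), which beats (T-1) L2. *)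
Lemma gram_form_unit_b (a b : Z) : a <> 0%Z -> (b = 1 \/ b = -1)%Z ->
  T * L2 < gram_form L1 L2 m a b.
Proof.
  intros Ha Hb; unfold gram_form.
  set (x := IZR a); set (s := IZR b).
  assert (Hs : s * s = 1) by (unfold s; destruct Hb as [-> | ->]; simpl; ring).
  assert (Hx : 1 <= Rabs x) by (unfold x; rewrite <- abs_IZR; apply IZR_le; lia).
  assert (Hcross : - (2 * Rabs x * Rabs m) <= 2 * x * s * m).
  { assert (Rabs (2 * x * s * m) = 2 * Rabs x * Rabs m).
    { rewrite !Rabs_mult, (Rabs_right 2) by lra.
      replace (Rabs s) with 1 by (unfold s; rewrite <- abs_IZR; destruct Hb as [-> | ->]; reflexivity).
      ring. }
    pose proof (Rle_abs (- (2 * x * s * m))) as Habs; rewrite Rabs_Ropp in Habs; lra. }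
  rewrite Hs, (sqr_Rabs x); pose proof (Rabs_pos m).
  assert (HxL1 : L1 <= Rabs x * L1) by nra.
  destruct HT as [_ [[-> Hc] | [Hc1 Hc2]]].
  - assert (Rabs x * (Rabs x * L1 - 2 * Rabs m) > 0) by (apply Rmult_gt_0_compat; lra). nra.
  - assert (Rabs x * (Rabs x * L1 - 2 * Rabs m) >= L1 / 2) by nra. nra.
Qed.

Lemma gram_form_short_off_axis (a b : Z) : b <> 0%Z ->
  gram_form L1 L2 m a b <= T * L2 -> a = 0%Z /\ (b = 1 \/ b = -1)%Z.
Proof.
  intros Hb Hle.
  destruct (Z_le_gt_dec 2 (Z.abs b)) as [Hb2|Hb2].
  { pose proof (gram_form_large_b a b Hb2); lra. }
  destruct (Z.eq_dec a 0) as [Ha|Ha]; [split; [exact Ha | lia]|].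
  pose proof (gram_form_unit_b a b Ha ltac:(lia)); lra.
Qed.

Lemma gram_form_short_on_axis (a : Z) : a <> 0%Z ->
  gram_form L1 L2 m a 0 <= T * L1 -> (a = 1 \/ a = -1)%Z.
Proof.
  intros Ha Hle; unfold gram_form in Hle; simpl in Hle.
  destruct (Z_le_gt_dec 2 (Z.abs a)) as [Ha2|Ha2]; [|lia].
  assert (4 <= IZR a * IZR a) by (rewrite <- mult_IZR; apply IZR_le; nia).
  destruct HT as [[_ HT3] _]; nra.
Qed.

End GramForm.

Section ShortVectors.

Variables (M : mat2) (e f : Z * Z) (T : R).
Hypotheses (Hs : is_sym M) (Hef : unimodular e f)
  (HL1 : 0 < qform M (zv e)) (HL12 : qform M (zv e) <= qform M (zv f))
  (Hm : 2 * Rabs (Mdot M e f) <= qform M (zv e))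
  (HT : admissible (qform M (zv e)) (qform M (zv f)) (Mdot M e f) T).

Lemma short_vector_off_e_line (x : Z * Z) : zdet e x <> 0%Z ->
  qform M (zv x) <= T * qform M (zv f) -> x = f \/ x = zneg f.
Proof.
  destruct (comb_surjective e f Hef x) as [a [b ->]].
  rewrite zdet_comb_l, qform_comb by exact Hs; intros Hb Hle.
  destruct (gram_form_short_off_axis _ _ _ _ HL1 HL12 Hm HT a b ltac:(lia) Hle)
    as [-> [-> | ->]]; [left | right]; destruct f; unfold comb, zneg; cbn [fst snd]; f_equal; ring.
Qed.

Lemma short_vector_off_f_line (x : Z * Z) : zdet f x <> 0%Z ->
  qform M (zv x) <= T * qform M (zv e) -> x = e \/ x = zneg e.
Proof.
  destruct (comb_surjective e f Hef x) as [a [b ->]].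
  rewrite zdet_comb_r, qform_comb by exact Hs; intros Ha Hle.
  destruct (Z.eq_dec b 0) as [->|Hb].
  - destruct (gram_form_short_on_axis _ _ _ _ HL1 HT a ltac:(lia) Hle) as [-> | ->];
      [left | right]; destruct e; unfold comb, zneg; cbn [fst snd]; f_equal; ring.
  - assert (HT1 : 1 <= T) by apply HT.
    assert (Hle2 : gram_form (qform M (zv e)) (qform M (zv f)) (Mdot M e f) a b
                   <= T * qform M (zv f)) by nra.
    destruct (gram_form_short_off_axis _ _ _ _ HL1 HL12 Hm HT a b Hb Hle2); lia.
Qed.

Lemma short_vector (x : Z * Z) : x <> (0%Z, 0%Z) ->
  qform M (zv x) <= T * qform M (zv e) ->
  x = e \/ x = f \/ x = zneg e \/ x = zneg f.
Proof.
  intros Hx Hle.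
  assert (Hoff : zdet e x <> 0%Z \/ zdet f x <> 0%Z).
  { destruct (comb_surjective e f Hef x) as [a [b Hab]].
    rewrite Hab, zdet_comb_l, zdet_comb_r.
    unfold unimodular in Hef.
    destruct (Z.eq_dec b 0) as [->|Hb]; [right | left; nia].
    destruct (Z.eq_dec a 0) as [->|Ha]; [now contradiction Hx | nia]. }
  assert (HT1 : 1 <= T) by apply HT.
  destruct Hoff as [Hoff|Hoff].
  - destruct (short_vector_off_e_line x Hoff ltac:(nra)); tauto.
  - destruct (short_vector_off_f_line x Hoff Hle); tauto.
Qed.

End ShortVectors.

Lemma qform_scal2 (c : R) (A : mat2) (v : R * R) : qform (scal2 c A) v = c * qform A v.
Proof. destruct v; unfold qform, dot, mulv, scal2; simpl; ring. Qed.

Lemma loewner_transfer (M M' : mat2) (tau : R) : pos_def M' -> 0 < tau ->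
  loewner_le (scal2 (/ tau ^ 2) M) M' -> loewner_le M' (scal2 (tau ^ 2) M) ->
  forall x y : Z * Z, Mnorm M' x <= Mnorm M' y ->
  qform M (zv x) <= tau ^ 4 * qform M (zv y).
Proof.
  intros Hp' Htau Hlow Hup x y Hxy.
  pose proof (qform_le_of_Mnorm_le M' x y Hp' Hxy) as Hq.
  pose proof (Hlow (zv x)) as Hx; pose proof (Hup (zv y)) as Hy.
  fold (qform (scal2 (/ tau ^ 2) M) (zv x)) (qform M' (zv x)) in Hx.
  fold (qform M' (zv y)) (qform (scal2 (tau ^ 2) M) (zv y)) in Hy.
  rewrite qform_scal2 in Hx, Hy.
  assert (Ht2 : 0 < tau ^ 2) by (apply pow_lt, Htau).
  apply Rmult_le_reg_l with (/ tau ^ 2); [apply Rinv_0_lt_compat, Ht2|].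
  replace (/ tau ^ 2 * (tau ^ 4 * qform M (zv y))) with (tau ^ 2 * qform M (zv y))
    by (field; lra).
  lra.
Qed.

(* Condition (ii): with det M <= kappa^2 L1^2 and m^2 <= L1^2/16 one gets
   (T - 1) L1 L2 <= 17/48 L1^2 < L1^2 / 2. *)
Lemma admissible_of_condition_bound (L1 L2 m K T : R) :
  0 < L1 -> L1 <= L2 -> 1 <= K -> 1 <= T -> 4 * Rabs m <= L1 ->
  L1 * L2 - m ^ 2 <= K * L1 ^ 2 -> T <= 1 + / 3 * / K ->
  admissible L1 L2 m T.
Proof.
  intros HL1 HL12 HK HT Hm Hdet Hcond.
  assert (HTK : (T - 1) * (3 * K) <= 1).
  { apply Rle_trans with ((/ 3 * / K) * (3 * K)); [apply Rmult_le_compat_r; lra|].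
    right; field; lra. }
  assert (Hm2 : 16 * (m * m) <= L1 * L1)
    by (rewrite sqr_Rabs; pose proof (Rabs_pos m); nra).
  assert (HKL1 : L1 * L1 <= K * (L1 * L1)) by nra.
  assert (HL1L2 : L1 * L2 <= 17 / 16 * (K * (L1 * L1))).
  { replace (m ^ 2) with (m * m) in Hdet by ring.
    replace (L1 ^ 2) with (L1 * L1) in Hdet by ring. lra. }
  assert (Hprod : (T - 1) * (L1 * L2) <= 17 / 48 * (L1 * L1)).
  { apply Rmult_le_reg_l with (3 * K); [lra|].
    assert (Hscaled : (T - 1) * (3 * K) * (L1 * L2) <= 1 * (L1 * L2))
      by (apply Rmult_le_compat_r; nra).
    nra. }
  split; [nra|]; right; split; [exact Hm|].
  apply Rmult_lt_reg_r with L1; [exact HL1|]. nra.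
Qed.

Lemma hypothesis_admissible (M : mat2) (e f : Z * Z) (tau : R) :
  S2plus M -> reduced_basis M e f -> 1 <= tau ->
  ((2 * mu_of M e f < lambda1_of M e f ^ 2 /\ tau = 1) \/
   (4 * mu_of M e f <= lambda1_of M e f ^ 2 /\
    tau ^ 4 <= 1 + / 3 * / (kappa M ^ 2))) ->
  admissible (qform M (zv e)) (qform M (zv f)) (Mdot M e f) (tau ^ 4).
Proof.
  intros HM Hred Htau Hcase.
  destruct (reduced_gram M e f HM Hred) as (HL1 & HL12 & _).
  assert (Hlambda : lambda1_of M e f ^ 2 = qform M (zv e))
    by (apply pow2_sqrt; left; exact HL1).
  unfold mu_of in Hcase; rewrite Hlambda, kappa_sq in Hcase.
  assert (HT : 1 <= tau ^ 4) by (rewrite <- (pow1 4); apply pow_incr; lra).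
  destruct Hcase as [[Hm ->] | [Hm Hcond]].
  - split; [rewrite pow1; lra | left; split; [apply pow1 | exact Hm]].
  - apply admissible_of_condition_bound with (opnorm M * opnorm (inv2 M));
      auto using condition_sq_ge_1.
    destruct Hred as [Hdet _].
    rewrite (gram_det M e f (proj1 HM)).
    assert (Hz : IZR (zdet e f) ^ 2 = 1) by (destruct Hdet as [-> | ->]; simpl; ring).
    pose proof (det2_le_condition_qform M (zv e) HM) as Hkappa.
    assert (Hn : 1 <= dot (zv e) (zv e))
      by (apply dot_zv_ge_1, (unimodular_neq_0 e f Hdet)).
    assert (Hn2 : 1 <= dot (zv e) (zv e) ^ 2) by (rewrite <- (pow1 2); apply pow_incr; lra).
    pose proof (det2_pos M HM). rewrite Hz. nra.
Qed.

(* e' is M'-minimal, hence M-short: e' is +-e or +-f.  f' is M'-minimal off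
   the line of e', and compared with whichever of e, f is off that line it
   is M-short and not collinear with e', which leaves the other one. *)
Theorem mainTheorem14 (M M' : mat2) (e f e' f' : Z * Z) (tau : R) :
  S2plus M -> S2plus M' ->
  reduced_basis M e f -> reduced_basis M' e' f' ->
  1 <= tau ->
  loewner_le (scal2 (/ tau ^ 2) M) M' ->
  loewner_le M' (scal2 (tau ^ 2) M) ->
  ((2 * mu_of M e f < lambda1_of M e f ^ 2 /\ tau = 1) \/
   (4 * mu_of M e f <= lambda1_of M e f ^ 2 /\
    tau ^ 4 <= 1 + / 3 * / (kappa M ^ 2))) ->
  (e' = e \/ e' = f \/ e' = zneg e \/ e' = zneg f) /\
  (f' = e \/ f' = f \/ f' = zneg e \/ f' = zneg f).
Proof.
  intros HM HM' Hred [Hdet' [He' Hf']] Htau Hlow Hup Hcase.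
  destruct (reduced_gram M e f HM Hred) as (HL1 & HL12 & Hm).
  pose proof (hypothesis_admissible M e f tau HM Hred Htau Hcase) as Hadm.
  pose proof (loewner_transfer M M' tau (proj2 HM') ltac:(lra) Hlow Hup) as Htransfer.
  destruct Hred as [Hdet _].
  pose proof (short_vector_off_e_line M e f _ (proj1 HM) Hdet HL1 HL12 Hm Hadm) as Hoff_e.
  pose proof (short_vector_off_f_line M e f _ (proj1 HM) Hdet HL1 HL12 Hm Hadm) as Hoff_f.
  assert (He'_short : e' = e \/ e' = f \/ e' = zneg e \/ e' = zneg f).
  { apply (short_vector M e f _ (proj1 HM) Hdet HL1 HL12 Hm Hadm).
    - apply (unimodular_neq_0 e' f' Hdet').
    - apply Htransfer, He', (unimodular_neq_0 e f Hdet). }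
  split; [exact He'_short|].
  unfold unimodular in Hdet, Hdet'.
  destruct He'_short as [-> | [-> | [-> | ->]]]; rewrite ?zdet_zneg in Hdet'.
  - destruct (Hoff_e f') as [-> | ->]; try lia; auto.
    apply Htransfer, Hf', not_in_line; lia.
  - destruct (Hoff_f f') as [-> | ->]; try lia; auto.
    apply Htransfer, Hf', not_in_line; rewrite zdet_swap; lia.
  - destruct (Hoff_e f') as [-> | ->]; try lia; auto.
    apply Htransfer, Hf', not_in_line; rewrite zdet_zneg; lia.
  - destruct (Hoff_f f') as [-> | ->]; try lia; auto.
    apply Htransfer, Hf', not_in_line; rewrite zdet_zneg, zdet_swap; lia.
Qed.
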